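(* Let $\mathbf d$ be a graphical degree sequence of even length. Then $\mathbf d$ has a realization containing a perfect 2-matching if and only if $\mathbf d$ has a realization containing a perfect matching.
   Context: All graphs are finite and simple. A sequence $(d_1,\dots,d_n)$ is graphical if some simple graph on $\{v_1,\dots,v_n\}$ has $d(v_i)=d_i$ for all $i$; such a graph is a realization. A perfect 2-matching of a graph is a spanning subgraph each of whose connected components is either a $K_2$ (a single edge) or an odd cycle. *)

From mathcomp Require Import all_boot.
Set Implicit Arguments. Unset Strict Implicit. Unset Printing Implicit Defensive.

Definition simple_graph (n : nat) (e : rel 'I_n) : Prop :=
  irreflexive e /\ symmetric e.

Definition deg (n : nat) (e : rel 'I_n) (v : 'I_n) : nat := #|[set w | e v w]|.

Definition realization (d : seq nat) (e : rel 'I_(size d)) : Prop :=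
  simple_graph e /\ forall i : 'I_(size d), deg e i = nth 0 d i.

Arguments realization : clear implicits.

Definition graphical (d : seq nat) : Prop := exists e, realization d e.

Definition spanning_subgraph (n : nat) (h e : rel 'I_n) : Prop :=
  simple_graph h /\ forall x y, h x y -> e x y.

Definition component (n : nat) (h : rel 'I_n) (x : 'I_n) : {set 'I_n} :=
  [set y | connect h x y].

Definition comp_is_K2 (n : nat) (h : rel 'I_n) (C : {set 'I_n}) : Prop :=
  exists x y, [/\ x != y, C = [set x; y] & h x y].

(* the component C of h is an odd cycle: its vertices can be listed
   cyclically as s = [x_0; ...; x_(k-1)], k odd, k >= 3, and the edges of h
   inside C are exactly the pairs of cyclically consecutive vertices *)
Definition comp_is_odd_cycle (n : nat) (h : rel 'I_n) (C : {set 'I_n}) : Prop :=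
  exists s : seq 'I_n,
    [/\ uniq s, odd (size s), 3 <= size s, C = [set x in s] &
        forall x y, x \in C -> y \in C ->
          h x y = (y == next s x) || (x == next s y)].

Definition perfect_2matching (n : nat) (e h : rel 'I_n) : Prop :=
  spanning_subgraph h e /\
  forall x, comp_is_K2 h (component h x) \/ comp_is_odd_cycle h (component h x).

Definition perfect_matching (n : nat) (e h : rel 'I_n) : Prop :=
  spanning_subgraph h e /\ forall x, comp_is_K2 h (component h x).

(* The components of a perfect 2-matching are edges and odd cycles, and an
   odd cycle is factor-critical: deleting any vertex leaves a path on an even
   number of vertices, which has a perfect matching.  As the number of
   vertices is even, the odd cycles come in pairs.  Given two disjoint
   factor-critical blocks B1, B2 with inner edges aa', bb', either ab or a'b'
   is already an edge, or the 2-switch trading aa', bb' for ab, a'b' creates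
   one while preserving all degrees.  Matching B1 - a, B2 - b and the edge ab
   then absorbs both blocks into the perfectly matched part, and induction on
   the number of blocks yields a realization with a perfect matching. *)

From mathcomp Require Import all_boot.
Set Implicit Arguments. Unset Strict Implicit. Unset Printing Implicit Defensive.

Section MatchingOn.
Variable n : nat.
Implicit Types (e : rel 'I_n) (S T B : {set 'I_n}) (f g : 'I_n -> 'I_n).

Definition matching_on e S f :=
  forall x, x \in S -> [/\ f x \in S, f x != x, f (f x) = x & e x (f x)].

Lemma matching_on_even e S f : matching_on e S f -> ~~ odd #|S|.
Proof.
(* f maps the points below their mate bijectively onto those above it. *)
move=> mf; pose L := S :&: [set x : 'I_n | x < f x].
have f_inj : {in L &, injective f}.
  move=> x y /setIP[/mf[_ _ ffx _] _] /setIP[/mf[_ _ ffy _] _] fxy.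
  by rewrite -ffx fxy ffy.
rewrite -(cardsID [set x : 'I_n | x < f x] S) -/L.
have -> : S :\: [set x : 'I_n | x < f x] = f @: L.
  apply/setP => y; rewrite !inE -leqNgt; apply/andP/imsetP => [[le_fy_y yS]|[x]].
    have [fyS fyy ffy _] := mf y yS.
    by exists (f y); rewrite ?ffy // !inE fyS ffy ltn_neqAle fyy le_fy_y.
  rewrite !inE => /andP[xS lt_x_fx] ->; have [fxS _ -> _] := mf x xS.
  by rewrite fxS ltnW.
by rewrite card_in_imset // addnn odd_double.
Qed.

Lemma matching_on_sub e e' S f :
  {in S &, forall x y, e x y -> e' x y} -> matching_on e S f -> matching_on e' S f.
Proof.
by move=> ee' mf x xS; have [fxS ? ? ?] := mf x xS; split=> //; apply: ee'.
Qed.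

Lemma matching_onU e S T f g : [disjoint S & T] ->
  matching_on e S f -> matching_on e T g ->
  matching_on e (S :|: T) (fun x => if x \in S then f x else g x).
Proof.
move=> dST mf mg x; rewrite inE; case: ifP => [xS _ | _ xT].
  by have [fxS ? -> ?] := mf x xS; rewrite inE fxS.
have [gxT ? -> ?] := mg x xT.
by rewrite inE gxT orbT (disjointFl dST gxT).
Qed.

Lemma matching_on_pair e a b : symmetric e -> a != b -> e a b ->
  matching_on e [set a; b] (fun x => if x == a then b else a).
Proof.
move=> sym_e ab eab x; have ba : (b == a) = false by rewrite eq_sym (negbTE ab).
rewrite !inE => /orP[] /eqP ->; rewrite ?eqxx ?ba ?eqxx ?orbT.
  by split; rewrite // ba.
by split; rewrite // sym_e.
Qed.

Definition factor_critical e B :=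
  forall x, x \in B -> exists g, matching_on e (B :\ x) g.

Lemma factor_critical_sub e e' B :
  {in B &, forall x y, e x y -> e' x y} -> factor_critical e B -> factor_critical e' B.
Proof.
move=> ee' fcB x /fcB[g mg]; exists g; apply: matching_on_sub mg.
by move=> y z /setD1P[_ yB] /setD1P[_ zB]; apply: ee'.
Qed.

Lemma factor_critical_odd e B : factor_critical e B -> B != set0 -> odd #|B|.
Proof.
move=> fcB /set0Pn[x xB]; have [g /matching_on_even] := fcB x xB.
by rewrite (cardsD1 x B) xB.
Qed.

Lemma factor_critical_neighbour e B x : factor_critical e B -> 1 < #|B| ->
  x \in B -> exists2 y, y \in B & e x y.
Proof.
move=> fcB B_gt1 xB; have /set0Pn[c /setD1P[cx cB]] : B :\ x != set0.
  by move: B_gt1; rewrite (cardsD1 x B) xB add1n ltnS card_gt0.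
have [g /(_ x)] := fcB c cB; rewrite !inE eq_sym cx xB => /(_ isT)[].
by move=> /andP[_ gxB] _ _ exg; exists (g x).
Qed.

End MatchingOn.


Section TwoSwitch.
Variable n : nat.
Implicit Types (e : rel 'I_n) (u v x y a b : 'I_n).

Definition same_edge u v x y := (x == u) && (y == v) || (x == v) && (y == u).

Lemma same_edgeC u v x y : same_edge u v x y = same_edge v u x y.
Proof. by rewrite /same_edge orbC. Qed.

Lemma same_edge_sym u v x y : same_edge u v x y = same_edge u v y x.
Proof. by rewrite /same_edge orbC; congr (_ || _); apply: andbC. Qed.

Lemma same_edge_outl u v x y : x != u -> x != v -> same_edge u v x y = false.
Proof. by rewrite /same_edge => /negbTE-> /negbTE->. Qed.

Lemma same_edge_missl u v x y : x != u -> y != u -> same_edge u v x y = false.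
Proof. by rewrite /same_edge => /negbTE-> /negbTE->; rewrite andbF. Qed.

Lemma same_edge_loop u v x : u != v -> same_edge u v x x = false.
Proof.
by move=> uv; rewrite /same_edge; case: eqP => [->|_]; rewrite ?(negbTE uv) ?andbF.
Qed.

Lemma same_edge_head u v y : u != v -> same_edge u v u y = (y == v).
Proof. by rewrite /same_edge eqxx eq_sym => /negbTE->; rewrite orbF. Qed.

Definition switch e a a' b b' : rel 'I_n := fun x y =>
  e x y && ~~ same_edge a a' x y && ~~ same_edge b b' x y
  || same_edge a b x y || same_edge a' b' x y.

Lemma switch_swap_ends e a a' b b' : switch e a a' b b' =2 switch e a' a b' b.
Proof. by move=> x y; rewrite /switch !(same_edgeC a) !(same_edgeC b) orbAC. Qed.

Lemma switch_swap_pairs e a a' b b' : switch e a a' b b' =2 switch e b b' a a'.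
Proof.
by move=> x y; rewrite /switch andbAC (same_edgeC a b) (same_edgeC a' b').
Qed.

Lemma switch_simple e a a' b b' : simple_graph e -> a != b -> a' != b' ->
  simple_graph (switch e a a' b b').
Proof.
move=> [irr_e sym_e] ab a'b'; split=> [x | x y]; rewrite /switch.
  by rewrite irr_e /= !same_edge_loop.
by rewrite [e x y]sym_e ![same_edge _ _ x y]same_edge_sym.
Qed.

Lemma deg_switch_head e a a' b b' : a != a' -> a != b -> a != b' ->
  e a a' -> ~~ e a b -> deg (switch e a a' b b') a = deg e a.
Proof.
move=> aa' ab ab' eaa' neab; rewrite /deg.
have -> : [set y | switch e a a' b b' a y] = b |: ([set y | e a y] :\ a').
  apply/setP=> y; rewrite !inE /switch !same_edge_head // !same_edge_outl //.
  by rewrite andbT orbF orbC andbC.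
by rewrite cardsU1 (cardsD1 a' [set y | e a y]) !inE eaa' (negbTE neab) andbF.
Qed.

Lemma eq_deg e e' v : e v =1 e' v -> deg e v = deg e' v.
Proof. by move=> ee'; apply: eq_card => w; rewrite !inE ee'. Qed.

Lemma deg_switch e a a' b b' : simple_graph e -> e a a' -> e b b' ->
  ~~ e a b -> ~~ e a' b' -> a != b -> a != b' -> a' != b -> a' != b' ->
  deg (switch e a a' b b') =1 deg e.
Proof.
move=> [irr_e sym_e] eaa' ebb' neab nea'b' ab ab' a'b a'b'.
have aa' : a != a' by apply: contraTneq eaa' => ->; rewrite irr_e.
have bb' : b != b' by apply: contraTneq ebb' => ->; rewrite irr_e.
move=> v; have [-> | va] := eqVneq v a; first exact: deg_switch_head.
have [-> | va'] := eqVneq v a'.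
  rewrite (eq_deg (switch_swap_ends e a a' b b' a')).
  by apply: deg_switch_head => //; rewrite 1?eq_sym 1?sym_e.
have [-> | vb] := eqVneq v b.
  rewrite (eq_deg (switch_swap_pairs e a a' b b' b)).
  by apply: deg_switch_head => //; rewrite 1?eq_sym 1?sym_e.
have [-> | vb'] := eqVneq v b'.
  rewrite (eq_deg (switch_swap_pairs e a a' b b' b')).
  rewrite (eq_deg (switch_swap_ends e b b' a a' b')).
  by apply: deg_switch_head => //; rewrite 1?eq_sym 1?sym_e.
by apply: eq_deg => w; rewrite /switch !same_edge_outl //= !andbT !orbF.
Qed.

Lemma switch_keeps e a a' b b' x y : x != a -> x != b -> y != a -> y != b ->
  e x y -> switch e a a' b b' x y.
Proof.
move=> xa xb ya yb exy.
by rewrite /switch exy (@same_edge_missl a a') // (@same_edge_missl b b').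
Qed.

Lemma switch_edge e a a' b b' : switch e a a' b b' a b.
Proof. by rewrite /switch /same_edge !eqxx orbT. Qed.

End TwoSwitch.


Section Blocks.
Variable n : nat.
Implicit Types (e : rel 'I_n) (S B : {set 'I_n}) (P : {set {set 'I_n}}).
Implicit Types (f : 'I_n -> 'I_n).

Lemma bridge_by_switch e B1 B2 : simple_graph e -> [disjoint B1 & B2] ->
  (exists2 a, a \in B1 & exists2 a', a' \in B1 & e a a') ->
  (exists2 b, b \in B2 & exists2 b', b' \in B2 & e b b') ->
  exists2 a, a \in B1 & exists2 b, b \in B2 & exists e',
    [/\ simple_graph e', deg e' =1 deg e, e' a b &
        {in ~: [set a; b] &, forall x y, e x y -> e' x y}].
Proof.
move=> se dB [a aB1 [a' a'B1 eaa']] [b bB2 [b' b'B2 ebb']].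
have [eab | neab] := boolP (e a b).
  by exists a => //; exists b => //; exists e; split.
have [ea'b' | nea'b'] := boolP (e a' b').
  by exists a' => //; exists b' => //; exists e; split.
have neq x y : x \in B1 -> y \in B2 -> x != y.
  by move=> xB1; apply: contraTneq => <-; rewrite (disjointFr dB xB1).
exists a => //; exists b => //; exists (switch e a a' b b'); split.
- exact: switch_simple se (neq _ _ aB1 bB2) (neq _ _ a'B1 b'B2).
- by apply: deg_switch; rewrite ?neq.
- exact: switch_edge.
- move=> x y; rewrite !inE !negb_or => /andP[xa xb] /andP[ya yb].
  exact: switch_keeps.
Qed.

Lemma matching_on_bridge e B1 B2 a b g1 g2 : symmetric e -> [disjoint B1 & B2] ->
  a \in B1 -> b \in B2 -> e a b ->
  matching_on e (B1 :\ a) g1 -> matching_on e (B2 :\ b) g2 ->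
  exists g, matching_on e (B1 :|: B2) g.
Proof.
move=> sym_e dB aB1 bB2 eab mg1 mg2.
have ab : a != b by apply: contraTneq bB2 => <-; rewrite (disjointFr dB aB1).
have d12 : [disjoint B1 :\ a & B2 :\ b] by apply: disjointW dB; apply: subD1set.
have d_ab : [disjoint B1 :\ a :|: B2 :\ b & [set a; b]].
  rewrite disjoint_sym disjoints_subset; apply/subsetP => x.
  rewrite !inE => /orP[] /eqP ->;
    by rewrite ?eqxx ?(disjointFr dB aB1) ?(disjointFl dB bB2) ?andbF.
have -> : B1 :|: B2 = B1 :\ a :|: B2 :\ b :|: [set a; b].
  apply/setP => x; rewrite !inE; have [->|_] := eqVneq x a; first by rewrite aB1 !orbT.
  by have [->|_] := eqVneq x b; rewrite /= ?bB2 ?eqxx ?orbT ?orbF.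
have mab := matching_on_pair sym_e ab eab.
exact: ex_intro (matching_onU d_ab (matching_onU d12 mg1 mg2) mab).
Qed.

Lemma join_factor_critical e S B1 B2 f : simple_graph e ->
  [disjoint B1 & B2] -> [disjoint S & B1 :|: B2] ->
  1 < #|B1| -> factor_critical e B1 -> 1 < #|B2| -> factor_critical e B2 ->
  matching_on e S f ->
  exists e' f', [/\ simple_graph e', deg e' =1 deg e,
    {in ~: (B1 :|: B2) &, forall x y, e x y -> e' x y} &
    matching_on e' (S :|: (B1 :|: B2)) f'].
Proof.
move=> se dB dS B1_gt1 fc1 B2_gt1 fc2 mf.
have inner_edge B : 1 < #|B| -> factor_critical e B ->
    exists2 x, x \in B & exists2 y, y \in B & e x y.
  move=> B_gt1 fcB; have /set0Pn[x xB] : B != set0 by rewrite -card_gt0 ltnW.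
  by exists x; last exact: factor_critical_neighbour.
have [a aB1 [b bB2 [e' [se' deg' e'ab keep]]]] :=
  bridge_by_switch se dB (inner_edge _ B1_gt1 fc1) (inner_edge _ B2_gt1 fc2).
have [[g1 mg1] [g2 mg2]] := (fc1 a aB1, fc2 b bB2).
have off_ab A : a \notin A -> b \notin A -> {in A &, forall x y, e x y -> e' x y}.
  move=> aA bA; have out x : x \in A -> x \in ~: [set a; b].
    rewrite !inE negb_or => xA.
    by apply/andP; split; [apply: contraNneq aA => <- | apply: contraNneq bA => <-].
  by move=> x y /out xab /out yab; apply: keep.
have aB2 := disjointFr dB aB1; have bB1 := disjointFl dB bB2.
have [g mg] : exists g, matching_on e' (B1 :|: B2) g.
  apply: matching_on_bridge se'.2 dB aB1 bB2 e'ab _ _.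
  - by apply: matching_on_sub mg1; apply: off_ab; rewrite !inE ?eqxx ?bB1 ?andbF.
  - by apply: matching_on_sub mg2; apply: off_ab; rewrite !inE ?eqxx ?aB2 ?andbF.
have [aS bS] : a \notin S /\ b \notin S.
  by rewrite !(disjointFl dS) // inE ?aB1 ?bB2 ?orbT.
exists e', (fun x => if x \in S then f x else g x); split => //.
  by apply: off_ab; rewrite !inE ?aB1 ?bB2 ?orbT.
by apply: matching_onU dS _ mg; apply: matching_on_sub mf; apply: off_ab.
Qed.

Lemma no_single_critical_block e B f : ~~ odd n -> B != set0 ->
  factor_critical e B -> matching_on e (~: B) f -> False.
Proof.
move=> even_n B0 /factor_critical_odd/(_ B0) odd_B /matching_on_even even_CB.
by move: even_n; rewrite -[n]card_ord -(cardsC B) oddD odd_B (negbTE even_CB).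
Qed.

Lemma perfect_matching_by_switches e P f : simple_graph e -> ~~ odd n ->
  trivIset P -> {in P, forall B, 1 < #|B| /\ factor_critical e B} ->
  matching_on e (~: cover P) f ->
  exists e' g, [/\ simple_graph e', deg e' =1 deg e & matching_on e' setT g].
Proof.
have [k] := ubnP #|P|; elim: k => // k IHk in e P f *.
move=> ltPk se even_n tP blocks mf.
have [P0 | [B1 B1P]] := set_0Vmem P.
  by exists e, f; rewrite P0 /cover big_set0 setC0 in mf.
have [B1_gt1 fc1] := blocks B1 B1P.
have [P1 | [B2 /setD1P[B21 B2P]]] := set_0Vmem (P :\ B1).
  have PB1 : P = [set B1] by rewrite -(setD1K B1P) P1 setU0.
  rewrite PB1 cover1 in mf; case: (no_single_critical_block even_n _ fc1 mf).
  by rewrite -card_gt0 ltnW.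
have [B2_gt1 fc2] := blocks B2 B2P.
have /trivIsetP dP := tP.
have dB : [disjoint B1 & B2] by apply: dP; rewrite // eq_sym.
have dS : [disjoint ~: cover P & B1 :|: B2].
  by rewrite disjoint_sym disjoints_subset setCK subUset !bigcup_sup.
have [e' [f' [se' deg' keep mf']]] :=
  join_factor_critical se dB dS B1_gt1 fc1 B2_gt1 fc2 mf.
have tP1 : trivIset (P :\ B1) by apply: trivIsetD.
have ltP'k : #|P :\ B1 :\ B2| < k.
  move: ltPk; rewrite (cardsD1 B1 P) B1P (cardsD1 B2 (P :\ B1)) !inE B21 B2P.
  by rewrite !add1n ltnS => /ltnW.
have blocks' : {in P :\ B1 :\ B2, forall B, 1 < #|B| /\ factor_critical e' B}.
  move=> C /setD1P[CB2 /setD1P[CB1 CP]]; have [C_gt1 fcC] := blocks C CP.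
  have out x : x \in C -> x \in ~: (B1 :|: B2).
    move=> xC; rewrite !inE (disjointFr (dP _ _ CP B1P CB1) xC).
    by rewrite (disjointFr (dP _ _ CP B2P CB2) xC).
  by split=> //; apply: factor_critical_sub fcC => x y /out xB /out yB; apply: keep.
have cover' : ~: cover (P :\ B1 :\ B2) = ~: cover P :|: (B1 :|: B2).
  by rewrite (coverD1 tP1) ?inE ?B21 // (coverD1 tP B1P) !setCD -setUA.
rewrite -cover' in mf'.
have [e'' [g [se'' deg'' mg]]] :=
  IHk e' _ f' ltP'k se' even_n (trivIsetD _ tP1) blocks' mf'.
by exists e'', g; split=> // v; rewrite deg'' deg'.
Qed.

End Blocks.


Section TwoMatchings.
Variable n : nat.
Implicit Types (e h : rel 'I_n) (S B C : {set 'I_n}) (P : {set {set 'I_n}}).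
Implicit Types (t : seq 'I_n) (f g : 'I_n -> 'I_n).

Lemma even_path_matching e t : symmetric e -> uniq t -> ~~ odd (size t) ->
  sorted e t -> exists f, matching_on e [set x in t] f.
Proof.
move=> sym_e; have [k] := ubnP (size t); elim: k t => // k IHk [|y1 [|y2 t]] //=.
  by move=> *; exists id => x; rewrite inE.
rewrite !ltnS !inE negb_or negbK => lt_t_k /and3P[/andP[y12 y1t] y2t ut] even_t.
move=> /andP[ey12 /path_sorted sorted_t].
have [g mg] := IHk t (ltnW lt_t_k) ut even_t sorted_t.
have d12 : [disjoint [set y1; y2] & [set x in t]].
  rewrite disjoints_subset; apply/subsetP => x.
  by rewrite !inE => /orP[] /eqP ->.
have -> : [set x in [:: y1, y2 & t]] = [set y1; y2] :|: [set x in t].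
  by apply/setP => x; rewrite !inE orbA.
exact: ex_intro (matching_onU d12 (matching_on_pair sym_e y12 ey12) mg).
Qed.

Lemma odd_cycle_factor_critical h C : symmetric h ->
  comp_is_odd_cycle h C -> factor_critical h C.
Proof.
move=> sym_h [s [us odd_s _ -> hs]] x; rewrite inE => xs.
have cycle_s : cycle h s.
  apply: (sub_in_cycle (P := mem s)) (cycle_next us); last exact/allP.
  by move=> y z ys zs /eqP <-; rewrite hs ?inE ?eqxx ?mem_next.
case: (rot_to xs) => i t rot_s.
have /andP[xt ut] : uniq (x :: t) by rewrite -rot_s rot_uniq.
have even_t : ~~ odd (size t) by move: odd_s; rewrite -(size_rot i) rot_s.
have sorted_t : sorted h t.
  by move: cycle_s; rewrite -(rot_cycle i) rot_s /= rcons_path => /andP[/path_sorted].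
suff -> : [set y in s] :\ x = [set y in t] by apply: even_path_matching.
apply/setP => y; rewrite !inE -(mem_rot i) rot_s inE.
by have [->|] := eqVneq y x; rewrite ?(negbTE xt).
Qed.

Lemma odd_cycle_card h C : comp_is_odd_cycle h C -> odd #|C| /\ 1 < #|C|.
Proof.
by move=> [s [us odd_s s3 -> _]]; rewrite cardsE (card_uniqP us); split=> //; apply: ltnW.
Qed.

Lemma K2_card h C : comp_is_K2 h C -> #|C| = 2.
Proof. by move=> [x [y [xy -> _]]]; rewrite cards2 xy. Qed.

Lemma component_eq h x y : symmetric h -> y \in component h x ->
  component h y = component h x.
Proof.
move=> sym_h; rewrite inE => cxy; apply/setP => z.
by rewrite !inE (same_connect (sym_connect_sym sym_h) cxy).
Qed.

Lemma K2_neighbour h x : simple_graph h -> comp_is_K2 h (component h x) ->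
  exists y, forall z, h x z = (z == y).
Proof.
move=> [irr_h sym_h] [u [v [uv comp_x huv]]].
have nbr z : h x z -> (z == u) || (z == v).
  by move=> hxz; rewrite -in_set2 -comp_x inE connect1.
have : x \in [set u; v] by rewrite -comp_x inE connect0.
rewrite in_set2 => /orP[] /eqP xE; rewrite xE in nbr *.
  exists v => z; apply/idP/eqP => [huz | -> //].
  by case/orP: (nbr z huz) => /eqP zE //; rewrite zE irr_h in huz.
exists u => z; apply/idP/eqP => [hvz | ->]; last by rewrite sym_h.
by case/orP: (nbr z hvz) => /eqP zE //; rewrite zE irr_h in hvz.
Qed.

Lemma matching_on_K2_components e h S : simple_graph h ->
  (forall x y, h x y -> e x y) ->
  {in S, forall x, comp_is_K2 h (component h x) /\ component h x \subset S} ->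
  matching_on e S (fun x => odflt x [pick y | h x y]).
Proof.
move=> simple_h he K2S; have [irr_h sym_h] := simple_h; set f := fun x => _.
have f_mate x : x \in S -> forall z, h x z = (z == f x).
  move=> xS; have [y hy] := K2_neighbour simple_h (K2S x xS).1.
  move=> z; rewrite hy /f; case: pickP => [y' | /(_ y)]; last by rewrite hy eqxx.
  by rewrite hy => /eqP->.
move=> x xS; have hxf : h x (f x) by rewrite f_mate.
have fxS : f x \in S by apply: (subsetP (K2S x xS).2); rewrite inE connect1.
split=> //.
- by apply: contraTneq hxf => ->; rewrite irr_h.
- by apply/esym/eqP; rewrite -f_mate // sym_h.
- exact: he.
Qed.

Lemma perfect_2matching_blocks e h : perfect_2matching e h ->
  exists P f, [/\ trivIset P, {in P, forall B, 1 < #|B| /\ factor_critical e B}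
                & matching_on e (~: cover P) f].
Proof.
move=> [[simple_h he] comps]; have [_ sym_h] := simple_h.
pose P := [set component h x | x in [set x | odd #|component h x|]].
have notin_cover x : (x \in ~: cover P) = ~~ odd #|component h x|.
  rewrite in_setC cover_imset; congr (~~ _); apply/bigcupP/idP => [[y] | odd_x].
    by rewrite inE => odd_y /component_eq-> //.
  by exists x; rewrite ?inE ?connect0.
exists P, (fun x => odflt x [pick y | h x y]); split.
- apply/trivIsetP => A B /imsetP[x _ ->] /imsetP[y _ ->].
  apply: contraNT => /pred0Pn[z /andP[xz yz]].
  by rewrite -(component_eq sym_h xz) -(component_eq sym_h yz).
- move=> B /imsetP[x]; rewrite inE => odd_x ->.
  case: (comps x) => [/K2_card K2 | cyc]; first by rewrite K2 in odd_x.
  split; first by case: (odd_cycle_card cyc).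
  by apply: factor_critical_sub (odd_cycle_factor_critical sym_h cyc) => y z _ _ /he.
apply: matching_on_K2_components => // x; rewrite notin_cover => even_x; split.
  by case: (comps x) => // /odd_cycle_card[odd_x _]; rewrite odd_x in even_x.
apply/subsetP => y yx; rewrite notin_cover.
by rewrite (component_eq sym_h yx).
Qed.

Lemma perfect_matching_of_matching_on e g : matching_on e setT g ->
  perfect_matching e [rel x y | g x == y].
Proof.
move=> mg; have {}mg x := mg x (in_setT x).
split; first split; first split.
- by move=> x /=; have [_ /negbTE] := mg x.
- by move=> x y /=; apply/eqP/eqP => <-; [case: (mg x) | case: (mg y)] => _ _ ->.
- by move=> x y /eqP <-; have [_ _ _] := mg x.
move=> x; have [_ gx ggx _] := mg x.
exists x, (g x); split=> //=; first by rewrite eq_sym.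
by apply/setP => y; rewrite inE (fconnect_cycle (p := [:: x; g x])) ?inE //= ?ggx ?eqxx.
Qed.

End TwoMatchings.

Unset Implicit Arguments.

Theorem theorem19 (d : seq nat) :
  ~~ odd (size d) -> graphical d ->
  (exists e, realization d e /\ exists h, perfect_2matching e h) <->
  (exists e, realization d e /\ exists h, perfect_matching e h).
Proof.
move=> even_d _; split; last first.
  by case=> e [re [h [sub K2]]]; exists e; split=> //; exists h; split=> // x; left.
case=> e [[se deg_e] [h h2m]].
have [P [f [tP blocks mf]]] := perfect_2matching_blocks h2m.
have [e' [g [se' deg' mg]]] := perfect_matching_by_switches se even_d tP blocks mf.
exists e'; split; first by split=> // i; rewrite deg' deg_e.
by exists [rel x y | g x == y]; apply: perfect_matching_of_matching_on.
Qed.
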